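(* Let $\mathcal{C}=\mathsf{CSS}(A,B)$ with $A,B\subseteq\mathbb{F}_q^n$. If there exists a diagonal $n\times n$ matrix $D$ over $\mathbb{F}_q$ whose diagonal coefficients are not all equal such that $aD\in A$ and $bD\in B$ for all $a\in A$ and $b\in B$, then $\mathcal{C}$ is a splitting code.
   Context: For a CSS code $\mathsf{CSS}(A,B)$ given by subspaces $A,B\subseteq\mathbb{F}_q^n$ (vectors treated as row vectors), a subspace $A$ splits on a non-empty $h\subsetneq\{1,\dots,n\}$ if $A=A_1\oplus A_2$ where $A_1$ has support $h$ and $A_2$ is supported on the complement of $h$. The code splits on $h$ if both $A$ and $B$ split on $h$, and it is a splitting code if it splits on some such $h$. *)

From HB Require Import structures.
From mathcomp Require Import all_boot all_order all_algebra all_field.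
Set Implicit Arguments. Unset Strict Implicit. Unset Printing Implicit Defensive.
Import GRing.Theory.
Local Open Scope ring_scope.

Definition supported_on (F : fieldType) (n : nat) (U : {vspace 'rV[F]_n})
  (h : {set 'I_n}) : Prop :=
  forall v : 'rV[F]_n, v \in U -> forall i : 'I_n, i \notin h -> v 0 i = 0.

Definition splits_on (F : fieldType) (n : nat) (A : {vspace 'rV[F]_n})
  (h : {set 'I_n}) : Prop :=
  exists (A1 A2 : {vspace 'rV[F]_n}),
    [/\ (A1 + A2)%VS = A, (A1 :&: A2)%VS = 0%VS,
        supported_on A1 h & supported_on A2 (~: h)].

Definition css_splits_on (F : fieldType) (n : nat) (A B : {vspace 'rV[F]_n})
  (h : {set 'I_n}) : Prop :=
  [/\ h != set0, h != setT, splits_on A h & splits_on B h].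

Definition css_splitting (F : fieldType) (n : nat) (A B : {vspace 'rV[F]_n}) : Prop :=
  exists h : {set 'I_n}, css_splits_on A B h.

(* If [A] is stable under right multiplication by the diagonal matrix
   [D = diag(d)], it is stable under every polynomial in [D].  For a value
   [lam] of [d], the Lagrange product of the factors [(D - d_k) / (lam - d_k)]
   over the coordinates [k] with [d_k != lam] is the coordinate projection
   onto [h = {k | d_k = lam}], so [A] splits as [(A ∩ F^h) ⊕ (A ∩ F^(~h))].
   When the [d_k] are not all equal, [h] is a non-empty proper subset of
   coordinates. *)
From HB Require Import structures.
From mathcomp Require Import all_boot all_order all_algebra all_field.
Set Implicit Arguments. Unset Strict Implicit. Unset Printing Implicit Defensive.
Local Open Scope ring_scope.
Import GRing.Theory.

Section StableMatrices.
Variables (F : fieldType) (n : nat) (A : {vspace 'rV[F]_n}).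

Definition stable_under (M : 'M[F]_n) := forall v, v \in A -> v *m M \in A.

Lemma stable_under_scalar a : stable_under a%:M.
Proof. by move=> v vA; rewrite mul_mx_scalar memvZ. Qed.

Lemma stable_underB M N :
  stable_under M -> stable_under N -> stable_under (M - N).
Proof. by move=> sM sN v vA; rewrite mulmxBr memvB ?sM ?sN. Qed.

Lemma stable_underZ a M : stable_under M -> stable_under (a *: M).
Proof. by move=> sM v vA; rewrite -scalemxAr memvZ ?sM. Qed.

Lemma stable_under_prod (I : Type) (s : seq I) (M : I -> 'M[F]_n) :
  (forall k, stable_under (M k)) -> stable_under (\prod_(k <- s) M k).
Proof.
move=> sM; apply: (big_ind stable_under) => // [|P Q sP sQ v vA].
  by move=> v vA; rewrite -idmxE mulmx1.
by rewrite -mulmxE mulmxA sQ ?sP.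
Qed.

End StableMatrices.

Section CoordinateProjection.
Variables (F : fieldType) (n : nat).
Implicit Types (h : {set 'I_n}) (v : 'rV[F]_n).

Definition coord_proj h : 'M[F]_n := diag_mx (\row_i (i \in h)%:R).

Lemma coord_projE h v i :
  (v *m coord_proj h) 0 i = if i \in h then v 0 i else 0.
Proof. by rewrite mul_mx_diag !mxE; case: (i \in h); rewrite ?mulr1 ?mulr0. Qed.

Lemma coord_projD h : coord_proj h + coord_proj (~: h) = 1%:M.
Proof.
rewrite /coord_proj -(raddfD (@diag_mx F n)) -diag_const_mx; congr diag_mx.
by apply/rowP => i; rewrite !mxE inE; case: (i \in h); rewrite ?addr0 ?add0r.
Qed.

Definition supp_vspace h : {vspace 'rV[F]_n} :=
  lker (linfun (mulmxr (coord_proj (~: h)))).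

Lemma memv_suppP h v :
  reflect (forall i, i \notin h -> v 0 i = 0) (v \in supp_vspace h).
Proof.
rewrite memv_ker lfunE /=; apply: (iffP eqP) => [/matrixP v0 i hi | v0].
  by have := v0 0 i; rewrite coord_projE inE hi mxE.
apply/matrixP => r i; rewrite (ord1 r) coord_projE inE mxE.
by case: ifP => // hi; apply: v0; rewrite hi.
Qed.

Lemma mul_coord_projC h v : v *m coord_proj (~: h) = v - v *m coord_proj h.
Proof. by rewrite -{2}[v]mulmx1 -(coord_projD h) mulmxDr addrC addKr. Qed.

Lemma coord_proj_supp h v : v *m coord_proj h \in supp_vspace h.
Proof. by apply/memv_suppP => i /negbTE hi; rewrite coord_projE hi. Qed.

Lemma supp_vspaceI h : (supp_vspace h :&: supp_vspace (~: h))%VS = 0%VS.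
Proof.
apply/eqP; rewrite -subv0; apply/subvP => v.
move=> /memv_capP[/memv_suppP vh /memv_suppP vCh].
rewrite memv0; apply/eqP/matrixP => r i; rewrite (ord1 r) mxE.
by case: (boolP (i \in h)) => hi; [apply: vCh; rewrite inE hi | apply: vh].
Qed.

Lemma splits_on_coord_proj (A : {vspace 'rV[F]_n}) h :
  stable_under A (coord_proj h) -> splits_on A h.
Proof.
move=> Astable; exists (A :&: supp_vspace h)%VS, (A :&: supp_vspace (~: h))%VS.
split.
- apply/vspaceP => v; apply/idP/idP.
    by apply/subvP: v; rewrite subv_add !capvSl.
  move=> vA; rewrite -[v]mulmx1 -(coord_projD h) mulmxDr.
  apply: memv_add; rewrite memv_cap coord_proj_supp andbT; first exact: Astable.
  by rewrite mul_coord_projC memvB ?Astable.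
- apply/eqP; rewrite -subv0 -(supp_vspaceI h).
  by rewrite capvS ?capvSr.
- by move=> v /memv_capP[_ /memv_suppP].
- by move=> v /memv_capP[_ /memv_suppP].
Qed.

End CoordinateProjection.

Arguments coord_proj {F n} h.

Lemma prod_diag_mx (R : comPzRingType) (n : nat) (I : Type) (s : seq I)
    (r : I -> 'rV[R]_n) :
  \prod_(k <- s) diag_mx (r k) = diag_mx (\row_m \prod_(k <- s) r k 0 m).
Proof.
elim: s => [|k s IHs].
  rewrite big_nil -idmxE -diag_const_mx; congr diag_mx.
  by apply/rowP => m; rewrite !mxE big_nil.
rewrite big_cons IHs -mulmxE mul_diag_mx; apply/matrixP => i j.
by rewrite !mxE big_cons; case: eqVneq => [->|]; rewrite ?mulr1n ?mulr0n ?mulr0.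
Qed.

Section DiagonalSplitting.
Variables (F : fieldType) (n : nat) (d : 'rV[F]_n) (lam : F).

Definition eigen_coords : {set 'I_n} := [set k | d 0 k == lam].

Definition lagrange_factor (k : 'I_n) : 'M[F]_n :=
  (lam - d 0 k)^-1 *: (diag_mx d - (d 0 k)%:M).

Lemma lagrange_factorE k :
  lagrange_factor k = diag_mx (\row_m ((d 0 m - d 0 k) / (lam - d 0 k))).
Proof.
rewrite /lagrange_factor -diag_const_mx -linearB -linearZ /=.
by congr diag_mx; apply/rowP => m; rewrite !mxE mulrC.
Qed.

Lemma prod_lagrange_factor :
  \prod_(k <- [seq k <- enum 'I_n | d 0 k != lam]) lagrange_factor k
    = coord_proj eigen_coords.
Proof.
under eq_bigr do rewrite lagrange_factorE.
rewrite prod_diag_mx; congr diag_mx; apply/rowP => m; rewrite !mxE inE.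
under eq_bigr do rewrite mxE.
have [dm | dm] := eqVneq (d 0 m) lam.
  rewrite big_seq big1 // => k; rewrite mem_filter => /andP[dk _].
  by rewrite dm divff // subr_eq0 eq_sym.
apply/eqP; rewrite prodf_seq_eq0; apply/hasP; exists m.
  by rewrite mem_filter mem_enum dm.
by rewrite subrr mul0r eqxx.
Qed.

Lemma splits_on_eigen_coords (A : {vspace 'rV[F]_n}) :
  stable_under A (diag_mx d) -> splits_on A eigen_coords.
Proof.
move=> sD; apply: splits_on_coord_proj; rewrite -prod_lagrange_factor.
apply: stable_under_prod => k.
exact/stable_underZ/stable_underB/stable_under_scalar.
Qed.

End DiagonalSplitting.

Theorem proposition14 (F : finFieldType) (n : nat) (A B : {vspace 'rV[F]_n})
  (D : 'M[F]_n) :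
  is_diag_mx D ->
  (exists i j : 'I_n, D i i != D j j) ->
  (forall a : 'rV[F]_n, a \in A -> a *m D \in A) ->
  (forall b : 'rV[F]_n, b \in B -> b *m D \in B) ->
  css_splitting A B.
Proof.
move=> /diag_mxP[d ->] [i [j]]; rewrite !mxE !eqxx !mulr1n => dij sA sB.
exists (eigen_coords d (d 0 i)); split.
- by apply/set0Pn; exists i; rewrite inE.
- apply/negP => /eqP hT; move: (in_setT j).
  by rewrite -hT inE eq_sym (negbTE dij).
- exact: splits_on_eigen_coords.
- exact: splits_on_eigen_coords.
Qed.
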